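(* Let $K$ be an algebraically closed field, $R=K[x_1,\dots,x_N]$, and let $G\subset R$ be a finite set of monomials. Suppose there are subsets $S_0,\dots,S_r$ of $G$ such that (i) $\bigcup_{i=0}^r S_i=G$; (ii) $S_0$ has exactly one element; (iii) the following recursive procedure can always be performed and always comes to an end, regardless of the choice of the indeterminate $z$ and of the index $j$ at each step: 0. Set $T=S_0$. 1. Pick an indeterminate $z$ dividing the only element of $T$. 2. Cancel (remove) all monomials divisible by $z$ from every $S_i$ (and from $G$). 3. If no element of $G$ is left, end. Otherwise pick an index $j$ such that exactly one element is left in $S_j$ (such an index must exist for the procedure to be performable), and set $T$ equal to the current $S_j$. 4. Go to 1. For $i=0,\dots,r$ set $q_i=\sum_{\mu\in S_i}\mu$. Then $$\sqrt{(G)}=\sqrt{(q_0,\dots,q_r)}.$$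
   Context: $(G)$ denotes the ideal of $R$ generated by $G$; $\sqrt{J}$ denotes the radical of an ideal $J$. Condition (iii) means: for every sequence of choices, whenever monomials of $G$ remain after step 2, some $S_j$ has exactly one remaining element, and after finitely many steps all monomials of $G$ have been cancelled. *)

From HB Require Import structures.
From mathcomp Require Import all_boot all_order all_algebra.
From mathcomp Require Import finmap.
From mathcomp Require Import mpoly.
Set Implicit Arguments. Unset Strict Implicit. Unset Printing Implicit Defensive.
Import GRing.Theory.
Local Open Scope ring_scope.
Local Open Scope fset_scope.

Definition in_ideal (R : comNzRingType) (gs : seq R) (f : R) : Prop :=
  exists c : 'I_(size gs) -> R, f = \sum_(i < size gs) c i * gs`_i.

Definition in_radical (R : comNzRingType) (gs : seq R) (f : R) : Prop :=
  exists n : nat, in_ideal gs (f ^+ n).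

Definition alive (N : nat) (Z : {set 'I_N}) (m : 'X_{1..N}) : bool :=
  [forall i in Z, m i == 0%N].

Definition remaining (N : nat) (A : {fset 'X_{1..N}}) (Z : {set 'I_N})
  : seq 'X_{1..N} := [seq m <- enum_fset A | alive Z m].

(* Reachable states (Z, t) of the procedure of condition (iii):
   Z = set of indeterminates chosen so far (so the monomials cancelled are
   exactly those divisible by some element of Z), t = the only element of T. *)
Inductive reach (N r : nat) (G : {fset 'X_{1..N}})
    (S : 'I_r.+1 -> {fset 'X_{1..N}}) : {set 'I_N} -> 'X_{1..N} -> Prop :=
| reach_start t : t \in S ord0 -> reach G S set0 t
| reach_step Z t (z : 'I_N) (j : 'I_r.+1) t' :
    reach G S Z t ->
    (0 < t z)%N ->
    has (alive (z |: Z)) (enum_fset G) ->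
    remaining (S j) (z |: Z) = [:: t'] ->
    reach G S (z |: Z) t'.

(* Condition (iii): at every reachable state, step 1 can be performed, and
   for every choice of z in step 1, if monomials of G remain then some S_j
   has exactly one remaining element.  (Termination is automatic: each step
   cancels the current monomial t, which was not yet cancelled.) *)
Definition procedure_ok (N r : nat) (G : {fset 'X_{1..N}})
    (S : 'I_r.+1 -> {fset 'X_{1..N}}) : Prop :=
  forall Z t, reach G S Z t ->
    (exists z : 'I_N, (0 < t z)%N) /\
    (forall z : 'I_N, (0 < t z)%N -> has (alive (z |: Z)) (enum_fset G) ->
       exists j : 'I_r.+1, size (remaining (S j) (z |: Z)) = 1%N).

From HB Require Import structures.
From mathcomp Require Import all_boot all_order all_algebra.
From mathcomp Require Import finmap.
From mathcomp Require Import mpoly.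
From mathcomp Require Import zify.
Import GRing.Theory.
Set Implicit Arguments. Unset Strict Implicit.
Local Open Scope ring_scope.

(* Let P_Z be the ideal generated by the q_i and the variables
   of Z.  If the procedure is in state (Z, t), then t is the only monomial of
   S_j not divisible by a variable of Z, so t = q_j - (terms divisible by some
   z in Z) lies in P_Z.  For every variable x_i dividing t, either no monomial
   of G survives the cancellation of Z + {i}, and then every monomial of G lies
   in (P_Z, x_i), or the procedure moves on to a state (Z + {i}, t') and by
   induction every monomial of G lies in the radical of (P_Z, x_i).  Since the
   radical of (P, a) meets the radical of (P, b) inside the radical of
   (P, a b), every monomial of G lies in the radical of (P_Z, t) = radical of
   P_Z.  At the initial state Z is empty, giving rad (G) in rad (q_0..q_r); the
   converse inclusion holds because each q_i is a sum of monomials of G.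
   Only commutativity of the coefficient ring is used. *)

Section GeneratedIdeal.
Variable R : comNzRingType.
Implicit Types (P Q : R -> Prop) (a b x y : R).

Inductive generated P : R -> Prop :=
| gen_base x : P x -> generated P x
| gen0 : generated P 0
| genD x y : generated P x -> generated P y -> generated P (x + y)
| genM a x : generated P x -> generated P (a * x).

Definition radical P (f : R) := exists n, generated P (f ^+ n).

Lemma genMr P x a : generated P x -> generated P (x * a).
Proof. by rewrite mulrC; apply: genM. Qed.

Lemma genN P x : generated P x -> generated P (- x).
Proof. by rewrite -mulN1r; apply: genM. Qed.

Lemma genB P x y : generated P x -> generated P y -> generated P (x - y).
Proof. by move=> gx gy; apply: genD gx (genN gy). Qed.

Lemma genMn P x k : generated P x -> generated P (x *+ k).
Proof. by rewrite -mulr_natl; apply: genM. Qed.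

Lemma gen_sum P (I : Type) (s : seq I) (C : pred I) (F : I -> R) :
  (forall i, C i -> generated P (F i)) -> generated P (\sum_(i <- s | C i) F i).
Proof.
move=> gF; elim/big_rec: _ => [|i x Ci gx]; first exact: gen0.
exact: genD (gF i Ci) gx.
Qed.

Lemma generated_sub P Q :
  (forall x, P x -> generated Q x) -> forall f, generated P f -> generated Q f.
Proof. by move=> PQ f; elim=> [x /PQ // | | x y _ ? _ ? | a x _ ?]; constructor. Qed.

Lemma radical_sub P Q :
  (forall x, P x -> generated Q x) -> forall f, radical P f -> radical Q f.
Proof. by move=> PQ f [n gfn]; exists n; apply: generated_sub gfn. Qed.

Lemma genX_leq P x k l : (k <= l)%N -> generated P (x ^+ k) -> generated P (x ^+ l).
Proof. by move=> le_kl; rewrite -(subnK le_kl) exprD; apply: genM. Qed.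

(* Binomial expansion of (x + y)^(k + l): each term has x^k or y^l as factor. *)
Lemma radicalD P x y : radical P x -> radical P y -> radical P (x + y).
Proof.
move=> [k gxk] [l gyl]; exists (k + l)%N; rewrite exprDn.
apply: gen_sum => i _; apply: genMn.
have [le_li | lt_il] := leqP l i; first by apply/genM/(genX_leq le_li).
by apply/genMr/(genX_leq _ gxk); have := ltn_ord i; lia.
Qed.

Lemma radicalM P a x : radical P x -> radical P (a * x).
Proof. by move=> [n gxn]; exists n; rewrite exprMn; apply: genM. Qed.

Lemma radical_generated P Q :
  (forall y, P y -> radical Q y) -> forall x, generated P x -> radical Q x.
Proof.
move=> PQ x; elim=> [y /PQ // | | y z _ ? _ ? | a y _ ?].
- by exists 1%N; rewrite expr1; apply: gen0.
- exact: radicalD.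
- exact: radicalM.
Qed.

Lemma radical_idem P x : radical (radical P) x -> radical P x.
Proof.
move=> [n /(radical_generated (fun y => id))[k gk]].
by exists (n * k)%N; rewrite exprM.
Qed.

Definition adjoin P a : R -> Prop := fun x => P x \/ x = a.

Lemma generated_adjoinM P a b u v :
  generated (adjoin P a) u -> generated (adjoin P b) v ->
  generated (adjoin P (a * b)) (u * v).
Proof.
have gP c x : P x -> generated (adjoin P c) x by move=> Px; apply: gen_base; left.
elim=> [x [Px | ->] | | x y _ gx _ gy | c x _ gx] gv.
- exact/genMr/gP.
- elim: gv => [y [Py | ->] | | y z _ gy _ gz | c y _ gy].
  + exact/genM/gP.
  + by apply: gen_base; right.
  + by rewrite mulr0; apply: gen0.
  + by rewrite mulrDr; apply: genD.
  + by rewrite mulrCA; apply: genM.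
- by rewrite mul0r; apply: gen0.
- by rewrite mulrDl; apply: genD; [apply: gx | apply: gy].
- by rewrite -mulrA; apply/genM/gx.
Qed.

Lemma radical_adjoinM P a b f :
  radical (adjoin P a) f -> radical (adjoin P b) f -> radical (adjoin P (a * b)) f.
Proof. by move=> [k gk] [l gl]; exists (k + l)%N; rewrite exprD; apply: generated_adjoinM. Qed.

Lemma radical_adjoin1 P f : radical (adjoin P 1) f.
Proof. by exists 1%N; rewrite expr1 -[f]mulr1; apply/genM/gen_base; right. Qed.

Lemma radical_adjoinX P a f k :
  radical (adjoin P a) f -> radical (adjoin P (a ^+ k)) f.
Proof.
move=> rf; elim: k => [|k IHk]; first by rewrite expr0; apply: radical_adjoin1.
by rewrite exprS; apply: radical_adjoinM.
Qed.

Lemma radical_adjoin_prod P (I : finType) (F : I -> R) f :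
  (forall i, radical (adjoin P (F i)) f) -> radical (adjoin P (\prod_i F i)) f.
Proof.
move=> rF; elim/big_rec: _ => [|i x _ rx]; first exact: radical_adjoin1.
exact: radical_adjoinM.
Qed.

Lemma radical_adjoin_gen P a f :
  generated P a -> radical (adjoin P a) f -> radical P f.
Proof. by move=> ga; apply: radical_sub => x [Px | ->] //; apply: gen_base. Qed.

Lemma in_idealP (gs : seq R) f : in_ideal gs f <-> generated (fun x => x \in gs) f.
Proof.
split=> [[c ->] | ].
  by apply: gen_sum => i _; apply/genM/gen_base/mem_nth.
elim=> [x x_gs | | x y _ [c1 ->] _ [c2 ->] | a x _ [c ->]].
- pose i := Ordinal (etrans (index_mem x gs) x_gs).
  exists (fun j => (j == i)%:R).
  rewrite (bigD1 i) //= eqxx mul1r nth_index // big1 ?addr0 // => j /negbTE->.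
  by rewrite mul0r.
- by exists (fun _ => 0); rewrite big1 // => i _; rewrite mul0r.
- exists (fun i => c1 i + c2 i); rewrite -big_split.
  by apply: eq_bigr => i _; rewrite mulrDl.
- exists (fun i => a * c i); rewrite mulr_sumr.
  by apply: eq_bigr => i _; rewrite mulrA.
Qed.

Lemma in_radicalP (gs : seq R) f : in_radical gs f <-> radical (fun x => x \in gs) f.
Proof. by split=> [[n /in_idealP] | [n /in_idealP]]; exists n. Qed.

End GeneratedIdeal.

Local Open Scope fset_scope.

Section MonomialCancellation.
Variables (R : comNzRingType) (N r : nat) (G : {fset 'X_{1..N}}).
Variable S : 'I_r.+1 -> {fset 'X_{1..N}}.
Hypothesis S0_single : #|` S ord0| = 1%N.
Implicit Types (Z : {set 'I_N}) (m t : 'X_{1..N}).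

Definition q i : {mpoly R[N]} := \sum_(m <- enum_fset (S i)) 'X_[m].

Definition q_and_vars (Z : {set 'I_N}) (x : {mpoly R[N]}) : Prop :=
  (exists i, x = q i) \/ (exists2 z, z \in Z & x = 'X_z).

Lemma q_and_varsU1 Z i x :
  q_and_vars (i |: Z) x -> generated (adjoin (q_and_vars Z) 'X_i) x.
Proof.
move=> [qx | [z]]; first by apply: gen_base; left; left.
rewrite in_setU1 => /orP[/eqP-> | zZ] ->; apply: gen_base; first by right.
by left; right; exists z.
Qed.

Lemma monomial_not_alive P Z m :
  (forall z, z \in Z -> generated P ('X_z : {mpoly R[N]})) ->
  ~~ alive Z m -> generated P 'X_[m].
Proof.
move=> gZ /forallPn[i]; rewrite negb_imply -lt0n => /andP[iZ mi].
rewrite mpolyXE_id (bigD1 i) //= -(prednK mi) exprS -mulrA.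
exact/genMr/gZ.
Qed.

Lemma reach_remaining Z t : reach G S Z t -> exists j, remaining (S j) Z = [:: t].
Proof.
case=> [t0 t0S | Z0 t0 z j t' _ _ _ remj]; last by exists j.
exists ord0; have -> : remaining (S ord0) set0 = enum_fset (S ord0).
  rewrite /remaining (@eq_filter _ _ predT) ?filter_predT // => m.
  by apply/forallP => i; rewrite in_set0.
move: S0_single (t0S : t0 \in enum_fset (S ord0)).
by case: (enum_fset (S ord0)) => [|a [|b s]] //= _; rewrite mem_seq1 => /eqP->.
Qed.

Lemma reach_alive Z t : reach G S Z t -> alive Z t.
Proof.
move=> /reach_remaining[j remj].
by have := mem_head t [::]; rewrite -remj mem_filter => /andP[].
Qed.

Lemma reach_monomial_gen Z t : reach G S Z t -> generated (q_and_vars Z) 'X_[t].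
Proof.
move=> /reach_remaining[j remj].
have -> : 'X_[t] = q j - \sum_(m <- enum_fset (S j) | ~~ alive Z m) 'X_[m].
  by rewrite /q (bigID (alive Z)) /= -big_filter -/(remaining _ _) remj big_seq1 addrK.
apply: genB; first by apply: gen_base; left; exists j.
apply: gen_sum => m /monomial_not_alive; apply => z zZ.
by apply: gen_base; right; exists z.
Qed.

Lemma radical_adjoin_monomial P t (f : {mpoly R[N]}) :
  (forall i, (0 < t i)%N -> radical (adjoin P 'X_i) f) -> radical (adjoin P 'X_[t]) f.
Proof.
move=> rX; rewrite mpolyXE_id; apply: radical_adjoin_prod => i.
have [-> | /rX] := posnP (t i); first by rewrite expr0; apply: radical_adjoin1.
exact: radical_adjoinX.
Qed.

Hypothesis ok : procedure_ok G S.

Lemma reach_radical n Z t : (N - #|Z| < n)%N -> reach G S Z t ->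
  forall m, m \in G -> radical (q_and_vars Z) 'X_[m].
Proof.
elim: n Z t => [//| n IHn] Z t ltZn reachZ m mG.
apply: (radical_adjoin_gen (reach_monomial_gen reachZ)).
apply: radical_adjoin_monomial => i ti; apply: radical_sub (@q_and_varsU1 Z i) _ _.
have [G_alive | /hasPn G_dead] := boolP (has (alive (i |: Z)) (enum_fset G)); last first.
  exists 1%N; rewrite expr1; apply: monomial_not_alive (G_dead m mG) => z zZ.
  by apply: gen_base; right; exists z.
have iZ : i \notin Z.
  apply: contraTN ti => iZ.
  by move/forallP/(_ i): (reach_alive reachZ); rewrite iZ => /eqP->.
have [j] := (ok reachZ).2 i ti G_alive.
case remj: (remaining (S j) (i |: Z)) => [|t' [|? ?]] // _.
apply: IHn (reach_step reachZ ti G_alive remj) m mG.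
have := max_card (mem (i |: Z)); rewrite card_ord cardsU1 iZ.
by move: ltZn; set k := #|Z|; lia.
Qed.

Lemma radical_q_monomial m : m \in G -> radical (q_and_vars set0) 'X_[m].
Proof.
have [t0 t0S] : exists t0, t0 \in enum_fset (S ord0).
  by move: S0_single; case: (enum_fset (S ord0)) => [|a s] // _; exists a; apply: mem_head.
exact: reach_radical (ltnSn _) (reach_start G t0S) m.
Qed.

End MonomialCancellation.

Theorem proposition2 (K : closedFieldType) (N r : nat)
    (G : {fset 'X_{1..N}}) (S : 'I_r.+1 -> {fset 'X_{1..N}}) :
  (forall i, S i `<=` G) ->
  (forall m, m \in G -> exists i, m \in S i) ->
  #|` S ord0| = 1%N ->
  procedure_ok G S ->
  forall f : {mpoly K[N]},
    in_radical [seq 'X_[m] | m <- enum_fset G] f <->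
    in_radical [seq \sum_(m <- enum_fset (S i)) 'X_[m] | i <- enum 'I_r.+1] f.
Proof.
move=> SG _ S0_single ok f; rewrite !in_radicalP.
have q_mem i : q K S i \in [seq q K S i | i <- enum 'I_r.+1] by rewrite map_f ?mem_enum.
split=> [rf | ]; last first.
  apply: radical_sub => _ /mapP[i _ ->]; rewrite /q big_seq.
  by apply: gen_sum => m mS; apply/gen_base/map_f/(fsubsetP (SG i)).
apply/radical_idem/(radical_sub _ rf) => _ /mapP[m mG ->]; apply: gen_base.
apply: (radical_sub _ (radical_q_monomial K S0_single ok mG)).
by move=> x [[i ->] | [z]]; [apply/gen_base/q_mem | rewrite in_set0].
Qed.
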